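(* Let $G=(V,E)$ be a 3-connected, transient, simple proper planar graph with bounded vertex degree and locally finite dual that is circle packed in $\mathbb{H}^2$, and let $\mathcal{A}$ be a nonempty proper closed subset of $\partial\mathbb{H}^2$. The following are equivalent: (1) there is an open set $\mathcal{O}_{\mathcal A}\supseteq\mathcal A$ such that for every open set $U_{\mathcal A}$ with $\mathcal A\subseteq U_{\mathcal A}\subseteq\mathcal O_{\mathcal A}$, the graph $G\setminus U_{\mathcal A}$ is transient; (2) there is an open set $U_{\mathcal A}\supseteq\mathcal A$ such that $G\setminus U_{\mathcal A}$ is transient.
   Context: Vertices are identified with the Euclidean centers of the circles of a circle packing of the unit disk with tangency graph $G$; open sets are with respect to the topology induced by the path metric $d_m$ of $m(e)=r_u+r_v$ ($r_v$ the radius at $v$). $G\setminus U$ denotes the subgraph of $G$ obtained by deleting the vertices lying in $U$. A graph is transient if simple random walk on it (on each component considered) is transient. *)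

From Stdlib Require Import Reals Lra List ClassicalEpsilon.
Open Scope R_scope.
Set Implicit Arguments.

Definition pnorm (p : R * R) : R := sqrt (fst p * fst p + snd p * snd p).
Definition pdist (p q : R * R) : R := pnorm (fst p - fst q, snd p - snd q).
Definition psub (p q : R * R) : R * R := (fst p - fst q, snd p - snd q).
Definition cross (a b : R * R) : R := fst a * snd b - snd a * fst b.
Definition dot (a b : R * R) : R := fst a * fst b + snd a * snd b.
Definition on_circle (p : R * R) : Prop := fst p * fst p + snd p * snd p = 1.

(* x lies strictly inside the open counterclockwise angular sector going
   from direction a to direction b (a, b, x nonzero vectors). *)
Definition sector_open (a b x : R * R) : Prop :=
  (cross a b > 0 /\ cross a x > 0 /\ cross x b > 0) \/
  (cross a b < 0 /\ ~ (cross b x >= 0 /\ cross x a >= 0)) \/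
  (cross a b = 0 /\ dot a b < 0 /\ cross a x > 0) \/
  (cross a b = 0 /\ dot a b > 0 /\ ~ (cross a x = 0 /\ dot a x > 0)).

Definition Rltb (a b : R) : bool := if Rlt_dec a b then true else false.

(* even-odd rule: does the edge [p,q] cross the horizontal ray from z to the right *)
Definition crossb (z p q : R * R) : bool :=
  andb (xorb (Rltb (snd z) (snd p)) (Rltb (snd z) (snd q)))
       (Rltb (fst z) (fst p + (snd z - snd p) * (fst q - fst p) / (snd q - snd p))).

Definition graph_nb {V : Type} (adj : V -> V -> Prop) (nb : V -> list V) : Prop :=
  (forall u v, adj u v <-> In v (nb u)) /\ (forall u, NoDup (nb u)).

Definition simple_graph {V : Type} (adj : V -> V -> Prop) : Prop :=
  (forall u, ~ adj u u) /\ (forall u v, adj u v -> adj v u).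

Definition bounded_degree {V : Type} (nb : V -> list V) : Prop :=
  exists D : nat, forall v, (length (nb v) <= D)%nat.

Fixpoint walk_in {V : Type} (adj : V -> V -> Prop) (S : V -> Prop)
    (u : V) (l : list V) (v : V) : Prop :=
  match l with
  | nil => u = v
  | x :: l' => adj u x /\ S x /\ walk_in adj S x l' v
  end.

Definition connected_in {V : Type} (adj : V -> V -> Prop) (S : V -> Prop) : Prop :=
  forall u v, S u -> S v -> exists l, walk_in adj S u l v.

Definition three_connected {V : Type} (adj : V -> V -> Prop) : Prop :=
  connected_in adj (fun _ => True) /\
  (exists a b c d : V, NoDup (a :: b :: c :: d :: nil)) /\
  (forall a b : V, connected_in adj (fun v => v <> a /\ v <> b)).

Definition nb_in {V : Type} (nb : V -> list V) (S : V -> Prop) (v : V) : list V :=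
  filter (fun u => if excluded_middle_informative (S u) then true else false) (nb v).

Fixpoint sum_list (l : list R) : R :=
  match l with nil => 0 | x :: l' => x + sum_list l' end.

Fixpoint srw_p {V : Type} (nb : V -> list V) (S : V -> Prop) (n : nat) (v w : V) : R :=
  match n with
  | O => if excluded_middle_informative (v = w) then 1 else 0
  | S n' => sum_list (map (fun u => / INR (length (nb_in nb S v)) * srw_p nb S n' u w)
                          (nb_in nb S v))
  end.

(* SRW on G[S] started at v (a non-isolated vertex of G[S]) is transient:
   the expected number of visits to v, sum_n p_n(v,v), is finite *)
Definition transient_at {V : Type} (nb : V -> list V) (S : V -> Prop) (v : V) : Prop :=
  S v /\ (exists u, In u (nb v) /\ S u) /\
  exists M : R, forall N : nat, sum_f_R0 (fun n => srw_p nb S n v v) N <= M.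

(* the induced subgraph G[S] is transient: SRW on (some component of) it is transient *)
Definition transient_sub {V : Type} (nb : V -> list V) (S : V -> Prop) : Prop :=
  exists v, transient_at nb S v.

Definition packing {V : Type} (adj : V -> V -> Prop) (c : V -> R * R) (r : V -> R) : Prop :=
  (forall v, 0 < r v /\ pnorm (c v) + r v < 1) /\
  (forall u v, u <> v -> pdist (c u) (c v) >= r u + r v) /\
  (forall u v, adj u v <-> (u <> v /\ pdist (c u) (c v) = r u + r v)).

(* w is the next neighbour of v after u in counterclockwise order *)
Definition next_ccw {V : Type} (nb : V -> list V) (c : V -> R * R) (v u w : V) : Prop :=
  In u (nb v) /\ In w (nb v) /\ u <> w /\
  forall x, In x (nb v) ->
    ~ sector_open (psub (c u) (c v)) (psub (c w) (c v)) (psub (c x) (c v)).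

(* s is a face-boundary walk of the embedding induced by the packing *)
Definition face_seq {V : Type} (nb : V -> list V) (c : V -> R * R) (s : nat -> V) : Prop :=
  forall k, next_ccw nb c (s (S k)) (s k) (s (S (S k))).

Definition finite_face {V : Type} (nb : V -> list V) (c : V -> R * R)
    (s : nat -> V) (n : nat) : Prop :=
  face_seq nb c s /\ (0 < n)%nat /\ s n = s O /\ s (S n) = s (S O).

(* locally finite dual: every face is bounded by finitely many edges *)
Definition locally_finite_dual {V : Type} (adj : V -> V -> Prop) (nb : V -> list V)
    (c : V -> R * R) : Prop :=
  forall u v, adj u v -> exists s n, s O = u /\ s (S O) = v /\ finite_face nb c s n.

(* z lies in the interior of the polygon of centres of a (finite) face *)
Definition in_face_polygon {V : Type} (nb : V -> list V) (c : V -> R * R) (z : R * R) : Prop :=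
  exists s n, finite_face nb c s n /\
    Nat.odd (length (filter (fun k => crossb z (c (s k)) (c (s (S k)))) (seq 0 n))) = true.

(* the carrier (closed disks + interstices) is the whole open unit disk *)
Definition packed_in_H2 {V : Type} (adj : V -> V -> Prop) (nb : V -> list V)
    (c : V -> R * R) (r : V -> R) : Prop :=
  packing adj c r /\
  forall z, pnorm z < 1 -> (exists v, pdist z (c v) <= r v) \/ in_face_polygon nb c z.

(* ---------- the space V ∪ ∂H^2 with the path metric d_m, m(e) = r_u + r_v ---------- *)
Inductive point (V : Type) : Type :=
  | Vtx : V -> point V
  | Bdy : {p : R * R | on_circle p} -> point V.
Arguments Vtx {V} _.
Arguments Bdy {V} _.

Fixpoint walk_len {V : Type} (r : V -> R) (u : V) (l : list V) : R :=
  match l with nil => 0 | x :: l' => r u + r x + walk_len r x l' end.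

(* d_m(u,v) < eps *)
Definition vv_lt {V : Type} (adj : V -> V -> Prop) (r : V -> R) (u v : V) (eps : R) : Prop :=
  exists l, walk_in adj (fun _ => True) u l v /\ walk_len r u l < eps.

Definition ray_lt {V : Type} (adj : V -> V -> Prop) (c : V -> R * R) (r : V -> R)
    (v : V) (p : R * R) (eps : R) : Prop :=
  exists s : nat -> V, s O = v /\ (forall k, adj (s k) (s (S k))) /\
    (exists L, L < eps /\ forall N, sum_f_R0 (fun k => r (s k) + r (s (S k))) N <= L) /\
    Un_cv (fun k => fst (c (s k))) (fst p) /\ Un_cv (fun k => snd (c (s k))) (snd p).

(* d_m(x,y) < eps on V ∪ ∂H^2 *)
Definition dm_lt {V : Type} (adj : V -> V -> Prop) (c : V -> R * R) (r : V -> R)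
    (x y : point V) (eps : R) : Prop :=
  match x, y with
  | Vtx u, Vtx v => vv_lt adj r u v eps
  | Vtx u, Bdy q => ray_lt adj c r u (proj1_sig q) eps
  | Bdy p, Vtx v => ray_lt adj c r v (proj1_sig p) eps
  | Bdy p, Bdy q => proj1_sig p = proj1_sig q \/
      exists v a b, a + b < eps /\ ray_lt adj c r v (proj1_sig p) a /\
                    ray_lt adj c r v (proj1_sig q) b
  end.

Definition dm_open {V : Type} (adj : V -> V -> Prop) (c : V -> R * R) (r : V -> R)
    (U : point V -> Prop) : Prop :=
  forall x, U x -> exists eps, 0 < eps /\ forall y, dm_lt adj c r x y eps -> U y.

Definition bdy_sub {V : Type} (A : R * R -> Prop) (U : point V -> Prop) : Prop :=
  forall q : {p : R * R | on_circle p}, A (proj1_sig q) -> U (Bdy q).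

Definition minus_set {V : Type} (U : point V -> Prop) : V -> Prop := fun v => ~ U (Vtx v).

Definition closed_proper_bdy (A : R * R -> Prop) : Prop :=
  (forall p, A p -> on_circle p) /\ (exists p, A p) /\ (exists p, on_circle p /\ ~ A p) /\
  (forall p, on_circle p -> ~ A p ->
     exists eps, 0 < eps /\ forall q, on_circle q -> pdist p q < eps -> ~ A q).

(** (1) implies (2) by taking U := O. For the converse take O := U: an open set U' inside U
    deletes fewer vertices, so it suffices that transience of simple random walk passes from an
    induced subgraph G[X] to every larger induced subgraph G[X'] (Rayleigh monotonicity).

    Monotonicity is proved with the Dirichlet energy E_X of the truncated Green functions
    g_K = sum_{n<=K} p^X_n(.,v) and g' = sum_{n<=N} p^X'_n(.,v). Summation by parts and
    Lap_X g_K = deg_X (delta_v - p^X_{K+1}(.,v)) give E_X(g', g_K) = 2 (deg_X(v) g'(v) - e_K),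
    while E_X(g', g') <= E_X'(g', g') <= 2 deg_X'(v) g'(v) and E_X(g_K, g_K) <= 2 deg_X(v) M, where
    M bounds the Green function of X at v. Cauchy-Schwarz then bounds every defect e_K from
    below by (deg_X(v) g'(v) - deg_X'(v) M) / 2, whereas sum_K e_K is finite because the Green
    function of X is finite at every vertex. Hence g'(v) <= deg_X'(v) M / deg_X(v) for all N. *)

From Stdlib Require Import Reals List Lra Lia ClassicalEpsilon.
Open Scope R_scope.

Section ListSum.
Context {A : Type}.

Definition lsum (l : list A) (f : A -> R) : R := sum_list (map f l).

Lemma lsum_nil f : lsum nil f = 0.
Proof. reflexivity. Qed.

Lemma lsum_cons a l f : lsum (a :: l) f = f a + lsum l f.
Proof. reflexivity. Qed.

Lemma lsum_ext l f g : (forall x, In x l -> f x = g x) -> lsum l f = lsum l g.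
Proof.
  induction l as [|a l IH]; intros H; [reflexivity|].
  rewrite !lsum_cons, (H a), IH; [reflexivity | intros; apply H; now right | now left].
Qed.

Lemma lsum_le l f g : (forall x, In x l -> f x <= g x) -> lsum l f <= lsum l g.
Proof.
  induction l as [|a l IH]; intros H; [apply Rle_refl|].
  rewrite !lsum_cons. apply Rplus_le_compat; [apply H; now left|].
  apply IH. intros; apply H; now right.
Qed.

Lemma lsum_plus l f g : lsum l (fun x => f x + g x) = lsum l f + lsum l g.
Proof. induction l as [|a l IH]; [rewrite !lsum_nil; lra|]. rewrite !lsum_cons, IH; lra. Qed.

Lemma lsum_minus l f g : lsum l (fun x => f x - g x) = lsum l f - lsum l g.
Proof. induction l as [|a l IH]; [rewrite !lsum_nil; lra|]. rewrite !lsum_cons, IH; lra. Qed.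

Lemma lsum_scal l c f : lsum l (fun x => c * f x) = c * lsum l f.
Proof. induction l as [|a l IH]; [rewrite !lsum_nil; lra|]. rewrite !lsum_cons, IH; lra. Qed.

Lemma lsum_const l c : lsum l (fun _ => c) = INR (length l) * c.
Proof.
  induction l as [|a l IH]; [rewrite lsum_nil; simpl; lra|].
  rewrite lsum_cons, IH. cbn [length]. rewrite S_INR; lra.
Qed.

Lemma lsum_zero l f : (forall x, In x l -> f x = 0) -> lsum l f = 0.
Proof. intros H. rewrite (lsum_ext l f (fun _ => 0)), lsum_const; auto; lra. Qed.

Lemma lsum_nonneg l f : (forall x, In x l -> 0 <= f x) -> 0 <= lsum l f.
Proof. intros H. rewrite <- (lsum_zero l (fun _ => 0)) by auto. now apply lsum_le. Qed.

Lemma lsum_In_le l f x : (forall y, In y l -> 0 <= f y) -> In x l -> f x <= lsum l f.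
Proof.
  induction l as [|a l IH]; intros H Hx; [contradiction|].
  rewrite lsum_cons. destruct Hx as [<-|Hx].
  - assert (0 <= lsum l f) by (apply lsum_nonneg; intros; apply H; now right). lra.
  - assert (0 <= f a) by (apply H; now left).
    assert (f x <= lsum l f) by (apply IH; [intros; apply H; now right | exact Hx]). lra.
Qed.

Lemma lsum_neq0_In l f : lsum l f <> 0 -> exists x, In x l /\ f x <> 0.
Proof.
  intros H. apply NNPP. intros Hn. apply H, lsum_zero.
  intros x Hx. apply NNPP. intros Hfx. apply Hn. eauto.
Qed.

Lemma lsum_sum_f_R0 l (F : nat -> A -> R) N :
  sum_f_R0 (fun n => lsum l (F n)) N = lsum l (fun x => sum_f_R0 (fun n => F n x) N).
Proof. induction N as [|N IH]; [reflexivity|]. simpl. now rewrite IH, <- lsum_plus. Qed.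

Lemma lsum_bounded l (F : nat -> A -> R) :
  (forall x, In x l -> exists B, forall n, F n x <= B) ->
  exists C, forall n, lsum l (F n) <= C.
Proof.
  induction l as [|a l IH]; intros H.
  - exists 0. intros. rewrite lsum_nil. lra.
  - destruct (H a) as [B HB]; [now left|].
    destruct IH as [C HC]; [intros; apply H; now right|].
    exists (B + C). intros n. rewrite lsum_cons. specialize (HB n). specialize (HC n). lra.
Qed.

Definition restrict (P : A -> Prop) (h : A -> R) (y : A) : R :=
  if excluded_middle_informative (P y) then h y else 0.

Lemma lsum_restrict_eq l a h : NoDup l -> In a l ->
  lsum l (restrict (fun y => y = a) h) = h a.
Proof.
  induction l as [|b l IH]; intros Hnd Hin; [contradiction|]. inversion Hnd; subst.
  rewrite lsum_cons. unfold restrict at 1.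
  destruct (excluded_middle_informative (b = a)) as [<-|Hne].
  - rewrite lsum_zero; [lra|]. intros x Hx. unfold restrict.
    destruct (excluded_middle_informative (x = b)); subst; tauto.
  - destruct Hin as [->|Hin]; [congruence|]. rewrite IH; auto; lra.
Qed.

Lemma lsum_incl l L h : NoDup l -> NoDup L -> incl l L ->
  lsum l h = lsum L (restrict (fun y => In y l) h).
Proof.
  induction l as [|a l IH]; intros Hl HL Hi.
  - symmetry. apply lsum_zero. intros. unfold restrict.
    destruct excluded_middle_informative; [contradiction|auto].
  - inversion Hl as [|? ? Hal Hnd]; subst. apply incl_cons_inv in Hi as [HaL Hi].
    rewrite lsum_cons, IH, <- (lsum_restrict_eq L a h), <- lsum_plus by assumption.
    apply lsum_ext. intros x _. unfold restrict.
    destruct (excluded_middle_informative (x = a)) as [Hxa|Hxa];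
    destruct (excluded_middle_informative (In x l));
    destruct (excluded_middle_informative (In x (a :: l))); simpl in *; subst;
      try lra; exfalso; intuition congruence.
Qed.

Lemma lsum_incl_le l L h : NoDup l -> NoDup L -> incl l L ->
  (forall x, 0 <= h x) -> lsum l h <= lsum L h.
Proof.
  intros. rewrite (lsum_incl l L) by auto. apply lsum_le. intros. unfold restrict.
  destruct excluded_middle_informative; [lra|auto].
Qed.

End ListSum.

Lemma lsum_swap {A B : Type} (l : list A) (m : list B) (F : A -> B -> R) :
  lsum l (fun x => lsum m (F x)) = lsum m (fun y => lsum l (fun x => F x y)).
Proof.
  induction l as [|a l IH].
  - symmetry. now apply lsum_zero.
  - rewrite lsum_cons, IH, <- lsum_plus. apply lsum_ext. intros. now rewrite lsum_cons.
Qed.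

Lemma sum_f_R0_shift_le (a : nat -> R) k N : (forall n, 0 <= a n) ->
  sum_f_R0 (fun n => a (k + n)%nat) N <= sum_f_R0 a (k + N).
Proof.
  intros Ha. induction N as [|N IH].
  - cbn [sum_f_R0]. rewrite Nat.add_0_r. destruct k as [|k]; cbn [sum_f_R0]; [lra|].
    assert (0 <= sum_f_R0 a k) by (apply cond_pos_sum; auto). lra.
  - rewrite Nat.add_succ_r. cbn [sum_f_R0]. rewrite Nat.add_succ_r. lra.
Qed.

Lemma le_0_of_bounded_partial_sums (a : nat -> R) c C :
  (forall n, c <= a n) -> (forall N, sum_f_R0 a N <= C) -> c <= 0.
Proof.
  intros Hc HC. apply Rnot_lt_le. intros Hpos.
  destruct (INR_archimed c C Hpos) as [N HN].
  assert (sum_f_R0 (fun _ => c) N <= sum_f_R0 a N) by (apply sum_Rle; auto).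
  rewrite sum_cte, S_INR in H. specialize (HC N). lra.
Qed.

(** * Simple random walk on an induced subgraph *)

Section RandomWalk.
Context {V : Type} (adj : V -> V -> Prop) (nb : V -> list V).
Hypothesis Hnb : graph_nb adj nb.
Hypothesis Hsimple : simple_graph adj.

Local Notation p := (srw_p nb).

Definition deg (X : V -> Prop) (x : V) : R := INR (length (nb_in nb X x)).

Lemma In_nb_in X x y : In y (nb_in nb X x) <-> adj x y /\ X y.
Proof.
  destruct Hnb as [Hadj _]. unfold nb_in. rewrite filter_In, <- Hadj.
  destruct excluded_middle_informative; intuition congruence.
Qed.

Lemma NoDup_nb_in X x : NoDup (nb_in nb X x).
Proof. apply NoDup_filter, Hnb. Qed.

Lemma deg_pos X x y : In y (nb_in nb X x) -> 0 < deg X x.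
Proof.
  unfold deg. destruct (nb_in nb X x); [contradiction|]. intros. apply lt_0_INR. simpl. lia.
Qed.

Lemma inv_deg_nonneg X x : 0 <= / deg X x.
Proof.
  unfold deg. destruct (nb_in nb X x) as [|y l]; [simpl; rewrite Rinv_0; lra|].
  apply Rlt_le, Rinv_0_lt_compat, lt_0_INR. simpl. lia.
Qed.

Lemma srw_p_S X n x w : p X (S n) x w = / deg X x * lsum (nb_in nb X x) (fun u => p X n u w).
Proof. simpl. now rewrite <- lsum_scal. Qed.

Lemma srw_p_nonneg X n : forall x w, 0 <= p X n x w.
Proof.
  induction n as [|n IH]; intros x w.
  - simpl. destruct excluded_middle_informative; lra.
  - rewrite srw_p_S. apply Rmult_le_pos; [apply inv_deg_nonneg|]. now apply lsum_nonneg.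
Qed.

Lemma lsum_nb_in_srw_p X n x w :
  lsum (nb_in nb X x) (fun u => p X n u w) = deg X x * p X (S n) x w.
Proof.
  rewrite srw_p_S. unfold deg. destruct (nb_in nb X x) eqn:E.
  - rewrite lsum_nil. ring.
  - field. apply not_0_INR. simpl; lia.
Qed.

Lemma srw_p_CK_le X a : forall b w x y, p X a w y * p X b y x <= p X (a + b) w x.
Proof.
  induction a as [|a IH]; intros b w x y.
  - simpl. destruct excluded_middle_informative; subst; [lra|].
    rewrite Rmult_0_l. apply srw_p_nonneg.
  - change (S a + b)%nat with (S (a + b)). rewrite !srw_p_S, Rmult_assoc.
    apply Rmult_le_compat_l; [apply inv_deg_nonneg|].
    rewrite Rmult_comm, <- lsum_scal. apply lsum_le. intros u _. rewrite Rmult_comm. apply IH.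
Qed.

Lemma srw_p_1_ge X y x : In x (nb_in nb X y) -> / deg X y <= p X 1 y x.
Proof.
  intros Hx. rewrite srw_p_S, <- lsum_scal.
  apply Rle_trans with (/ deg X y * p X 0 x x).
  { simpl. destruct excluded_middle_informative; [lra|congruence]. }
  apply (lsum_In_le _ (fun u => / deg X y * p X 0 u x)); auto.
  intros. apply Rmult_le_pos; [apply inv_deg_nonneg|apply srw_p_nonneg].
Qed.

Lemma srw_p_pos_sym X n : forall x w, X x -> 0 < p X n x w -> 0 < p X n w x.
Proof.
  induction n as [|n IH]; intros x w Hx Hp.
  - simpl in *. destruct excluded_middle_informative; subst; [|lra].
    destruct excluded_middle_informative; [lra|congruence].
  - rewrite srw_p_S, <- lsum_scal in Hp.
    destruct (lsum_neq0_In _ _ (Rgt_not_eq _ _ Hp)) as [y [Hy Hpy]].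
    assert (Hyw : 0 < p X n y w).
    { destruct (srw_p_nonneg X n y w) as [|E]; [assumption|]. rewrite <- E in Hpy. lra. }
    pose proof Hy as [Hxy HXy]%In_nb_in.
    assert (Hyx : In x (nb_in nb X y)) by (apply In_nb_in; split; [apply Hsimple|]; auto).
    pose proof (srw_p_1_ge X y x Hyx). pose proof (srw_p_CK_le X n 1 w x y).
    pose proof (IH y w HXy Hyw).
    assert (0 < / deg X y) by (apply Rinv_0_lt_compat; eapply deg_pos; eauto).
    rewrite Nat.add_1_r in *. nra.
Qed.

Fixpoint ball (v : V) (n : nat) : list V :=
  match n with O => v :: nil | S m => ball v m ++ flat_map nb (ball v m) end.

Lemma ball_le v n m x : (n <= m)%nat -> In x (ball v n) -> In x (ball v m).
Proof. induction 1; intros; [assumption|]. simpl. apply in_or_app. auto. Qed.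

Lemma ball_S_adj v n x y : In x (ball v n) -> adj x y -> In y (ball v (S n)).
Proof.
  intros. simpl. apply in_or_app. right. apply in_flat_map. exists x. now split; [|apply Hnb].
Qed.

Definition nodup_ball (v : V) (n : nat) : list V :=
  nodup (fun a b => excluded_middle_informative (a = b)) (ball v n).

Lemma In_nodup_ball v n x : In x (nodup_ball v n) <-> In x (ball v n).
Proof. apply nodup_In. Qed.

Lemma srw_p_support X v n x : p X n x v <> 0 -> In x (ball v n).
Proof.
  revert x. induction n as [|n IH]; intros x H.
  - simpl in *. destruct excluded_middle_informative; [now left|lra].
  - rewrite srw_p_S, <- lsum_scal in H. apply lsum_neq0_In in H as [y [Hy Hpy]].
    apply In_nb_in in Hy as [Hxy _].
    apply ball_S_adj with y; [|now apply Hsimple].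
    apply IH. intros E. apply Hpy. rewrite E. ring.
Qed.

Definition green X v K x : R := sum_f_R0 (fun n => p X n x v) K.

Lemma green_nonneg X v K x : 0 <= green X v K x.
Proof. apply cond_pos_sum. intros. apply srw_p_nonneg. Qed.

Lemma green_support X v K x : green X v K x <> 0 -> In x (ball v K).
Proof.
  unfold green. induction K as [|K IH]; cbn [sum_f_R0]; intros H.
  - now apply (srw_p_support X v 0).
  - destruct (Req_dec (sum_f_R0 (fun n => p X n x v) K) 0) as [E|E].
    + apply (srw_p_support X v (S K)). lra.
    + apply ball_le with K; auto.
Qed.

(* Summation by parts over the finite list [L] recovers the Laplacian of a function at [x]
   only when [L] contains all [Y]-neighbours of [x]. *)
Definition covers Y (L : list V) (f : V -> R) : Prop :=
  forall x, Y x -> f x <> 0 -> incl (nb_in nb Y x) L.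

Lemma green_covers X Y v K n : (K <= n)%nat -> covers Y (nodup_ball v (S n)) (green X v K).
Proof.
  intros Hle x _ Hx y Hy. apply In_nodup_ball. apply In_nb_in in Hy as [Hxy _].
  apply ball_S_adj with x; auto. apply ball_le with K; auto. now apply green_support with X.
Qed.

(* If v reaches x in k steps then p_k(v,x) p_n(x,v) <= p_(k+n)(v,v); otherwise x never
   reaches v either, by [srw_p_pos_sym]. *)
Lemma green_bounded X v x M : X x -> (forall N, green X v N v <= M) ->
  exists B, forall N, green X v N x <= B.
Proof.
  intros Hx HM. destruct (classic (exists k, 0 < p X k v x)) as [[k Hk]|Hn].
  - exists (M / p X k v x). intros N. apply Rmult_le_reg_l with (p X k v x); [assumption|].
    replace (p X k v x * (M / p X k v x)) with M by (field; lra).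
    unfold green. rewrite scal_sum.
    eapply Rle_trans; [|apply (HM (k + N)%nat)].
    eapply Rle_trans; [|apply sum_f_R0_shift_le; intros; apply srw_p_nonneg].
    apply sum_Rle. intros n _. rewrite Rmult_comm. apply srw_p_CK_le.
  - exists 0. intros N. apply Req_le, sum_eq_R0. intros n _.
    destruct (srw_p_nonneg X n x v) as [Hp|Hp]; [|auto].
    exfalso. apply Hn. exists n. now apply srw_p_pos_sym.
Qed.

(** * Dirichlet energy *)

Definition conductance X x y : R :=
  if excluded_middle_informative (X x /\ X y /\ adj x y) then 1 else 0.

Lemma conductance_nonneg X x y : 0 <= conductance X x y.
Proof. unfold conductance. destruct excluded_middle_informative; lra. Qed.

Lemma conductance_sym X x y : conductance X x y = conductance X y x.
Proof.
  destruct Hsimple as [_ Hsym]. unfold conductance.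
  do 2 destruct excluded_middle_informative; auto; exfalso; intuition.
Qed.

Lemma lsum_conductance X L x h : X x -> NoDup L -> incl (nb_in nb X x) L ->
  lsum L (fun y => conductance X x y * h y) = lsum (nb_in nb X x) h.
Proof.
  intros Hx HL Hi. rewrite (lsum_incl _ L h (NoDup_nb_in X x) HL Hi).
  apply lsum_ext. intros y _. unfold restrict, conductance. pose proof (In_nb_in X x y).
  do 2 destruct excluded_middle_informative; try ring; exfalso; intuition.
Qed.

Definition energy X (L : list V) (f g : V -> R) : R :=
  lsum L (fun x => lsum L (fun y => conductance X x y * ((f x - f y) * (g x - g y)))).

Lemma energy_by_parts X L f g :
  energy X L f g = 2 * lsum L (fun x => f x * lsum L (fun y => conductance X x y * (g x - g y))).
Proof.
  set (F := fun x y => f x * (conductance X x y * (g x - g y))).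
  assert (Hrow : lsum L (fun x => lsum L (fun y => F x y))
                 = lsum L (fun x => f x * lsum L (fun y => conductance X x y * (g x - g y))))
    by (apply lsum_ext; intros; apply lsum_scal).
  transitivity (lsum L (fun x => lsum L (fun y => F x y))
                + lsum L (fun x => lsum L (fun y => F y x))).
  { unfold energy. rewrite <- lsum_plus. apply lsum_ext. intros x _. rewrite <- lsum_plus.
    apply lsum_ext. intros y _. unfold F. rewrite (conductance_sym X y x). ring. }
  rewrite (lsum_swap L L (fun x y => F y x)), Hrow. ring.
Qed.

Lemma energy_mono_region X X' L f : (forall x, X x -> X' x) ->
  energy X L f f <= energy X' L f f.
Proof.
  intros H. apply lsum_le. intros. apply lsum_le. intros. apply Rmult_le_compat_r.
  - apply Rle_0_sqr.
  - unfold conductance. do 2 destruct excluded_middle_informative; try lra. firstorder.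
Qed.

Lemma energy_incl_le X L L' f : NoDup L -> NoDup L' -> incl L L' ->
  energy X L f f <= energy X L' f f.
Proof.
  intros. set (h := fun x y => conductance X x y * ((f x - f y) * (f x - f y))).
  assert (Hh : forall x y, 0 <= h x y)
    by (intros; unfold h; apply Rmult_le_pos; [apply conductance_nonneg|apply Rle_0_sqr]).
  change (lsum L (fun x => lsum L (h x)) <= lsum L' (fun x => lsum L' (h x))).
  apply Rle_trans with (lsum L (fun x => lsum L' (h x))).
  - apply lsum_le. intros. now apply lsum_incl_le.
  - apply lsum_incl_le; auto. intros. now apply lsum_nonneg.
Qed.

Lemma energy_amgm X L f g a b :
  2 * a * b * energy X L f g <= a ^ 2 * energy X L f f + b ^ 2 * energy X L g g.
Proof.
  unfold energy. rewrite <- !lsum_scal, <- lsum_plus. apply lsum_le. intros x _.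
  rewrite <- !lsum_scal, <- lsum_plus. apply lsum_le. intros y _.
  pose proof (conductance_nonneg X x y).
  assert (0 <= conductance X x y * (a * (f x - f y) - b * (g x - g y)) ^ 2)
    by (apply Rmult_le_pos; [assumption|apply pow2_ge_0]).
  nra.
Qed.

Lemma laplacian_green X v K x :
  lsum (nb_in nb X x) (fun y => green X v K x - green X v K y) =
  deg X x * (p X 0 x v - p X (S K) x v).
Proof.
  assert (Hshift : sum_f_R0 (fun n => p X (S n) x v) K = green X v K x + p X (S K) x v - p X 0 x v).
  { pose proof (decomp_sum (fun n => p X n x v) (S K) (Nat.lt_0_succ K)) as E.
    cbn [sum_f_R0 pred] in E. unfold green. lra. }
  rewrite lsum_minus, lsum_const. unfold green at 2.
  rewrite <- (lsum_sum_f_R0 _ (fun n y => p X n y v)).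
  rewrite (sum_eq _ (fun n => p X (S n) x v * deg X x))
    by (intros; rewrite lsum_nb_in_srw_p; ring).
  rewrite <- scal_sum, Hshift. unfold deg. ring.
Qed.

(** * Rayleigh monotonicity *)

Definition defect X v K (L : list V) (f : V -> R) : R :=
  lsum L (restrict X (fun x => f x * deg X x * p X (S K) x v)).

Lemma defect_nonneg X v K L f : (forall x, 0 <= f x) -> 0 <= defect X v K L f.
Proof.
  intros Hf. apply lsum_nonneg. intros x _. unfold restrict.
  destruct excluded_middle_informative; [|lra].
  apply Rmult_le_pos; [apply Rmult_le_pos|apply srw_p_nonneg]; auto. apply pos_INR.
Qed.

Lemma energy_green X v K L f : NoDup L -> In v L -> X v -> covers X L f ->
  energy X L f (green X v K) = 2 * (f v * deg X v - defect X v K L f).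
Proof.
  intros HL Hv HXv Hcov. rewrite energy_by_parts. f_equal.
  transitivity (lsum L (restrict X (fun x => f x * (deg X x * (p X 0 x v - p X (S K) x v))))).
  - apply lsum_ext. intros x _. unfold restrict. destruct excluded_middle_informative as [Hx|Hx].
    + destruct (Req_dec (f x) 0) as [E|E]; [rewrite E; ring|].
      rewrite (lsum_conductance X L x (fun y => green X v K x - green X v K y)), laplacian_green;
        auto.
    + rewrite lsum_zero; [ring|]. intros y _. unfold conductance.
      destruct excluded_middle_informative; [tauto|ring].
  - rewrite <- (lsum_restrict_eq L v (fun x => f x * deg X x)) by assumption.
    unfold defect. rewrite <- lsum_minus. apply lsum_ext. intros x _. unfold restrict. simpl.
    repeat destruct excluded_middle_informative; subst; try tauto; try ring; congruence.
Qed.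

Lemma energy_green_self_le X v K L : NoDup L -> In v L -> X v -> covers X L (green X v K) ->
  energy X L (green X v K) (green X v K) <= 2 * (green X v K v * deg X v).
Proof.
  intros. rewrite energy_green by assumption.
  pose proof (defect_nonneg X v K L (green X v K) (green_nonneg X v K)). lra.
Qed.

Section Monotonicity.
Variables (X X' : V -> Prop) (v u : V) (M : R).
Hypothesis HXX' : forall x, X x -> X' x.
Hypothesis HXv : X v.
Hypothesis Hu : In u (nb_in nb X v).
Hypothesis HM : forall N, green X v N v <= M.

Lemma defect_lower_bound N K :
  (deg X v * green X' v N v - deg X' v * M) / 2
  <= defect X v K (nodup_ball v (S N)) (green X' v N).
Proof.
  set (L := nodup_ball v (S N)). set (g' := green X' v N). set (g := green X v K).
  set (d := deg X v). set (d' := deg X' v). set (e := defect X v K L g').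
  assert (HL : NoDup L) by apply NoDup_nodup.
  assert (HvL : In v L) by (apply In_nodup_ball, ball_le with O; [lia | now left]).
  assert (Hd : 0 < d) by (eapply deg_pos, Hu).
  assert (Hd' : 0 < d').
  { apply In_nb_in in Hu as [? ?]. eapply deg_pos. apply In_nb_in. split; eauto. }
  assert (Emixed : energy X L g' g = 2 * (g' v * d - e))
    by (apply energy_green; auto; apply green_covers; lia).
  assert (Eg' : energy X L g' g' <= 2 * (g' v * d')).
  { eapply Rle_trans; [apply (energy_mono_region X X'), HXX'|].
    apply energy_green_self_le; auto. apply green_covers; lia. }
  assert (Eg : energy X L g g <= 2 * (M * d)).
  { apply Rle_trans with (energy X (nodup_ball v (S (N + K))) g g).
    - apply energy_incl_le; [assumption | apply NoDup_nodup |].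
      intros y Hy%In_nodup_ball. apply In_nodup_ball, ball_le with (S N); [lia | auto].
    - eapply Rle_trans.
      + apply energy_green_self_le; [apply NoDup_nodup | | assumption |].
        * apply In_nodup_ball, ball_le with O; [lia | now left].
        * apply green_covers. lia.
      + apply Rmult_le_compat_l; [lra|]. apply Rmult_le_compat_r; [lra|apply HM]. }
  (* Cauchy-Schwarz, weighted by the two degrees of v *)
  pose proof (energy_amgm X L g' g d d') as Hamgm.
  assert (Hprod : 2 * d * d' * (2 * (g' v * d - e)) <= 2 * d * d' * (d * g' v + d' * M)).
  { rewrite <- Emixed. eapply Rle_trans; [exact Hamgm|]. nra. }
  apply Rmult_le_reg_l in Hprod; [lra|nra].
Qed.

Lemma defect_summable N : exists C, forall T,
  sum_f_R0 (fun K => defect X v K (nodup_ball v (S N)) (green X' v N)) T <= C.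
Proof.
  set (g' := green X' v N).
  destruct (lsum_bounded (nodup_ball v (S N))
    (fun T x => sum_f_R0 (fun K => restrict X (fun x => g' x * deg X x * p X (S K) x v) x) T))
    as [C HC].
  { intros x _. unfold restrict. destruct excluded_middle_informative as [Hx|Hx].
    - destruct (green_bounded X v x M Hx HM) as [B HB].
      exists (g' x * deg X x * B). intros T.
      rewrite (sum_eq _ (fun K => p X (S K) x v * (g' x * deg X x))) by (intros; ring).
      rewrite <- scal_sum.
      apply Rmult_le_compat_l; [apply Rmult_le_pos; [apply green_nonneg|apply pos_INR]|].
      eapply Rle_trans; [|apply (HB (S T))].
      apply (sum_f_R0_shift_le (fun n => p X n x v) 1). intros. apply srw_p_nonneg.
    - exists 0. intros T. apply Req_le, sum_eq_R0. auto. }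
  exists C. intros T. unfold defect. rewrite lsum_sum_f_R0. apply HC.
Qed.

Lemma green_le_of_subregion N : green X' v N v <= deg X' v * M / deg X v.
Proof.
  assert (Hd : 0 < deg X v) by (eapply deg_pos, Hu).
  destruct (defect_summable N) as [C HC].
  pose proof (le_0_of_bounded_partial_sums _ _ C (defect_lower_bound N) HC).
  apply Rmult_le_reg_l with (deg X v); [assumption|].
  replace (deg X v * (deg X' v * M / deg X v)) with (deg X' v * M) by (field; lra). lra.
Qed.

End Monotonicity.

Lemma transient_at_mono X X' v : (forall x, X x -> X' x) ->
  transient_at nb X v -> transient_at nb X' v.
Proof.
  intros HXX' (HXv & (u & Hu & HXu) & M & HM).
  assert (Hu' : In u (nb_in nb X v)) by (apply In_nb_in; split; [apply Hnb|]; auto).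
  split; [auto|]. split; [exists u; auto|].
  exists (deg X' v * M / deg X v). exact (green_le_of_subregion X X' v u M HXX' HXv Hu' HM).
Qed.

End RandomWalk.

Theorem corollary3p13 (V : Type) (adj : V -> V -> Prop) (nb : V -> list V)
    (c : V -> R * R) (r : V -> R) (A : R * R -> Prop) :
  graph_nb adj nb -> simple_graph adj -> three_connected adj ->
  transient_sub nb (fun _ => True) -> bounded_degree nb ->
  packed_in_H2 adj nb c r -> locally_finite_dual adj nb c ->
  closed_proper_bdy A ->
  ((exists O : point V -> Prop, dm_open adj c r O /\ bdy_sub A O /\
      forall U : point V -> Prop, dm_open adj c r U -> bdy_sub A U ->
        (forall x, U x -> O x) -> transient_sub nb (minus_set U))
   <->
   (exists U : point V -> Prop, dm_open adj c r U /\ bdy_sub A U /\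
      transient_sub nb (minus_set U))).
Proof.
  intros Hnb Hsimple _ _ _ _ _ _. split.
  - intros (O & HO & HAO & Htrans). exists O. split; [exact HO|]. split; [exact HAO|].
    now apply Htrans.
  - intros (U & HU & HAU & v & Hv). exists U. split; [exact HU|]. split; [exact HAU|].
    intros U' _ _ HU'U. exists v.
    apply (transient_at_mono adj nb Hnb Hsimple (minus_set U)); [|exact Hv].
    intros x HxU HxU'. apply HxU, HU'U, HxU'.
Qed.
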